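(* Let $n, M \ge 2$ be integers and let $W_1, \dots, W_M \in \mathbb{R}^{n \times n}$ be weighted adjacency matrices (nonnegative entries) of a time-evolving graph on the fixed vertex set $\{v_1, \dots, v_n\}$, such that every row of each $W_t$ has positive sum. Let $S_t = D_t^{-1} W_t$, where $D_t = \mathrm{diag}\big(\sum_j (W_t)_{1j}, \dots, \sum_j (W_t)_{nj}\big)$. Let $\boldsymbol{\mu}_1 = \frac{1}{n}\mathbb{1}$ and $\boldsymbol{\mu}_{t+1} = S_t^\top \boldsymbol{\mu}_t$ for $t = 1, \dots, M-1$; assume all entries of $\boldsymbol{\mu}_t$ are strictly positive for all $t \in \{1,\dots,M\}$, and let $D_{\mu_t} = \mathrm{diag}(\boldsymbol{\mu}_t)$. Define $K_t = S_t$ and $T_t = D_{\mu_{t+1}}^{-1} S_t^\top D_{\mu_t}$ for $t = 1, \dots, M-1$, and let $\mathbf{C} \in \mathbb{R}^{nM \times nM}$ be the block matrix with $n\times n$ blocks $\mathbf{C}_{[s,r]}$ given by: $\mathbf{C}_{[1,2]} = K_1$; for $2 \le t \le M-1$, $\mathbf{C}_{[t,t-1]} = \tfrac12 T_{t-1}$ and $\mathbf{C}_{[t,t+1]} = \tfrac12 K_t$; $\mathbf{C}_{[M,M-1]} = T_{M-1}$; all other blocks zero. Let $\mathbf{L} = I - \mathbf{C}$ (the spatio-temporal graph Laplacian). Then all eigenvalues of $\mathbf{L}$ are real and contained in $[0, 2]$, and the spectrum of $\mathbf{L}$ is symmetric about $1$, i.e., if $\nu$ is an eigenvalue of $\mathbf{L}$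 then so is $2 - \nu$.
   Context: $I$ denotes the $nM \times nM$ identity matrix. *)

From HB Require Import structures.
From mathcomp Require Import all_boot all_order all_algebra.
From mathcomp Require Import complex.
From mathcomp Require Import reals.

Set Implicit Arguments.
Unset Strict Implicit.
Unset Printing Implicit Defensive.

Import Order.TTheory GRing.Theory Num.Theory.
Local Open Scope ring_scope.

(* Conventions: time indices are 1-based natural numbers t = 1..M,
   W : nat -> 'M[R]_n gives the adjacency matrices W_t (only t in 1..M
   matter).  Vectors mu_t are column vectors 'cV_n. *)

Section STGL.
Variables (R : realType) (n M : nat) (W : nat -> 'M[R]_n).

Definition Dmat (t : nat) : 'M[R]_n :=
  diag_mx (\row_i (\sum_j W t i j)).

Definition Smat (t : nat) : 'M[R]_n := invmx (Dmat t) *m W t.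

(* mu_aux k = mu_{k+1}:  mu_1 = (1/n) 1,  mu_{t+1} = S_t^T mu_t *)
Fixpoint mu_aux (k : nat) : 'cV[R]_n :=
  match k with
  | 0 => const_mx (n%:R^-1)
  | k'.+1 => (Smat k'.+1)^T *m mu_aux k'
  end.

Definition mu (t : nat) : 'cV[R]_n := mu_aux t.-1.

Definition Dmu (t : nat) : 'M[R]_n := diag_mx (mu t)^T.

Definition Kmat (t : nat) : 'M[R]_n := Smat t.

Definition Tmat (t : nat) : 'M[R]_n :=
  invmx (Dmu t.+1) *m (Smat t)^T *m Dmu t.

(* Block (s, r) of C, with 0-based block indices s r : 'I_M
   (paper's block [s+1, r+1]). *)
Definition Cblock (s r : 'I_M) : 'M[R]_n :=
  if (s == 0%N :> nat) && (r == 1%N :> nat) then Kmat 1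
  else if (s == M.-1 :> nat) && (r.+1 == s :> nat) then Tmat M.-1
  else if (r.+1 == s :> nat) then 2%:R^-1 *: Tmat s
  else if (r == s.+1 :> nat) then 2%:R^-1 *: Kmat s.+1
  else 0.

(* C in R^{nM x nM}, as an M x M block matrix with n x n blocks;
   its size \sum_(s < M) n equals n * M. *)
Definition Cmat : 'M[R]_(\sum_(s < M) n) := \mxblock_(s < M, r < M) Cblock s r.

Definition Lmat : 'M[R]_(\sum_(s < M) n) := 1%:M - Cmat.

End STGL.

Lemma Lsize_eq (n M : nat) : (\sum_(s < M) n)%N = (n * M)%N.
Proof. by rewrite sum_nat_const card_ord mulnC. Qed.

(* C = I - L is the transition matrix of a random walk on the nM pairs (vertex, time layer):
   it is row-stochastic; it is reversible for the positive weights deg(t) mu_t(v), where deg(t)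
   is the number of time layers adjacent to t, because T_t is the time reversal of S_t with
   respect to mu_t; and it only links consecutive layers, so it is bipartite between even and
   odd layers.  Reversibility makes the eigenvalues of C real, stochasticity bounds them by 1
   in modulus, and multiplying a left eigenvector by (-1)^layer turns an eigenvalue lam into
   -lam. *)

From HB Require Import structures.
From mathcomp Require Import all_boot all_order all_algebra.
From mathcomp Require Import complex.
From mathcomp Require Import reals.
From mathcomp Require Import ring lra zify.

Set Implicit Arguments.
Unset Strict Implicit.
Unset Printing Implicit Defensive.

Import Order.TTheory GRing.Theory Num.Theory.
Local Open Scope ring_scope.

Lemma eigenvalue_1B (F : fieldType) N (g : 'M[F]_N) a :
  eigenvalue (1%:M - g) a = eigenvalue g (1 - a).
Proof.
have eqv (v : 'rV_N) : v *m (1%:M - g) = a *: v <-> v *m g = (1 - a) *: v.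
  by rewrite mulmxBr mulmx1 scalerBl scale1r; split=> [<-|->];
    rewrite opprB addrC subrK.
by apply/eigenvalueP/eigenvalueP => -[v /eqv hv vn0]; exists v => //; apply/eqv.
Qed.

Section StochasticSpectrum.
Variables (R : rcfType) (N : nat) (A : 'M[R]_N).
Local Notation toC := (fun x : R => x%:C%C).
Local Notation AC := (map_mx toC A).

Lemma left_eigenvectorE (v : 'rV[R[i]]_N) lam l :
  v *m AC = lam *: v -> \sum_k v 0 k * (A k l)%:C%C = lam * v 0 l.
Proof.
move=> /rowP /(_ l); rewrite !mxE => <-.
by apply: eq_bigr => k _; rewrite mxE.
Qed.

Section Reversible.
Variable d : 'I_N -> R.
Hypothesis d_gt0 : forall k, 0 < d k.
Hypothesis A_reversible : forall k l, d k * A k l = d l * A l k.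

Lemma reversible_eigenvalue_real lam : eigenvalue AC lam -> lam \is Num.real.
Proof.
move=> /eigenvalueP [v /left_eigenvectorE ev /rV0Pn [k0 vk0]].
(* Restated so that rewriting yields [x^*] rather than an applied morphism. *)
have conj_realC (r : R) : (r%:C%C)^* = r%:C%C by apply/CrealP/complex_realP; exists r.
have conjM (x y : R[i]) : (x * y)^* = x^* * y^* by rewrite rmorphM.
have conj_sum (F : 'I_N -> R[i]) : (\sum_k F k)^* = \sum_k (F k)^* by rewrite rmorph_sum.
have A_div_sym k l : A k l / d l = A l k / d k.
  by apply/eqP; rewrite eqr_div ?lt0r_neq0 // mulrC A_reversible mulrC.
(* [S] is self-conjugate by reversibility and equals [lam * Q] with [Q > 0]. *)
pose S := \sum_k \sum_l v 0 k * (v 0 l)^* * (A k l / d l)%:C%C.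
pose Q := \sum_l v 0 l * (v 0 l)^* / (d l)%:C%C.
have S_eq : S = lam * Q.
  rewrite /S exchange_big mulr_sumr; apply: eq_bigr => l _.
  rewrite !mulrA -ev mulr_suml mulr_suml; apply: eq_bigr => k _.
  by rewrite rmorphM fmorphV /=; ring.
have S_conj : S^* = S.
  rewrite /S conj_sum exchange_big; apply: eq_bigr => l _.
  rewrite conj_sum; apply: eq_bigr => k _.
  by rewrite !conjM conjCK conj_realC A_div_sym [_^* * _]mulrC.
have Q_conj : Q^* = Q.
  rewrite /Q conj_sum; apply: eq_bigr => l _.
  by rewrite !conjM conjCK -fmorphV conj_realC [_^* * _]mulrC.
have Q_gt0 : 0 < Q.
  rewrite /Q (bigD1 k0) //= ltr_pwDl ?sumr_ge0 // => [|l _].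
    by rewrite divr_gt0 ?mul_conjC_gt0 ?ltcR.
  by rewrite divr_ge0 ?mul_conjC_ge0 ?ler0c ?ltW.
apply/CrealP/(mulIf (lt0r_neq0 Q_gt0)).
by rewrite -{1}Q_conj -conjM -S_eq S_conj.
Qed.

End Reversible.

Section Stochastic.
Hypothesis A_ge0 : forall k l, 0 <= A k l.
Hypothesis A_row_sum1 : forall k, \sum_l A k l = 1.

Lemma stochastic_eigenvalue_norm_le1 lam : eigenvalue AC lam -> `|lam| <= 1.
Proof.
move=> /eigenvalueP [v /left_eigenvectorE ev /rV0Pn [k0 vk0]].
pose T := \sum_l `|v 0 l|.
have T_gt0 : 0 < T by rewrite /T (bigD1 k0) //= ltr_pwDl ?sumr_ge0 ?normr_gt0.
rewrite -(ler_pM2r T_gt0) mul1r.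
have -> : `|lam| * T = \sum_l `|\sum_k v 0 k * (A k l)%:C%C|.
  by rewrite /T mulr_sumr; apply: eq_bigr => l _; rewrite ev normrM.
have row_norm k : \sum_l `|v 0 k * (A k l)%:C%C| = `|v 0 k|.
  rewrite (eq_bigr (fun l => `|v 0 k| * (A k l)%:C%C)) => [|l _].
    by rewrite -mulr_sumr -rmorph_sum A_row_sum1 mulr1.
  by rewrite normrM [`|_%:C%C|]ger0_norm // ler0c.
apply: le_trans (ler_sum _ (fun l _ => ler_norm_sum _ _ _)) _.
by rewrite exchange_big (eq_bigr _ (fun k _ => row_norm k)).
Qed.

End Stochastic.

Section Bipartite.
Variable side : 'I_N -> bool.
Hypothesis A_bipartite : forall k l, A k l != 0 -> side k != side l.

Lemma bipartite_eigenvalueN lam : eigenvalue AC lam -> eigenvalue AC (- lam).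
Proof.
move=> /eigenvalueP [v ev vn0].
pose Sg : 'M[R[i]]_N := diag_mx (\row_k (-1) ^+ side k).
have Sg_anticomm : Sg *m AC = - (AC *m Sg).
  apply/matrixP => k l; rewrite mul_diag_mx mul_mx_diag !mxE.
  have [->|/A_bipartite] := eqVneq (A k l) 0; first by rewrite mulr0 mul0r oppr0.
  by case: (side k) (side l) => [] [] //= _;
    rewrite ?mulN1r ?mulrN1 ?mul1r ?mulr1 ?opprK.
have Sg_invol : Sg *m Sg = 1%:M.
  rewrite mulmx_diag; apply/matrixP => k l; rewrite !mxE.
  by rewrite -expr2 sqrr_sign.
apply/eigenvalueP; exists (v *m Sg).
  by rewrite -mulmxA Sg_anticomm mulmxN mulmxA ev -scalemxAl scaleNr.
by apply: contra_neq vn0 => vSg0; rewrite -[v]mulmx1 -Sg_invol mulmxA vSg0 mul0mx.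
Qed.

End Bipartite.

Theorem stochastic_laplacian_spectrum (d : 'I_N -> R) (side : 'I_N -> bool) :
  (forall k l, 0 <= A k l) -> (forall k, \sum_l A k l = 1) ->
  (forall k, 0 < d k) -> (forall k l, d k * A k l = d l * A l k) ->
  (forall k l, A k l != 0 -> side k != side l) ->
  forall z : R[i], eigenvalue (map_mx toC (1%:M - A)) z ->
    (exists x : R, z = x%:C%C /\ 0 <= x <= 2) /\
    eigenvalue (map_mx toC (1%:M - A)) (2 - z).
Proof.
move=> A_ge0 A_row_sum1 d_gt0 A_reversible A_bipartite z.
have -> : map_mx toC (1%:M - A) = 1%:M - AC by rewrite map_mxB map_mx1.
rewrite !eigenvalue_1B => ev.
have /complex_realP [a lamE] := reversible_eigenvalue_real d_gt0 A_reversible ev.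
have a_bounds : -1 <= a <= 1.
  rewrite -!lecR rmorphN rmorph1 -real_ler_norml -?lamE.
    exact (stochastic_eigenvalue_norm_le1 A_ge0 A_row_sum1 ev).
  by apply/complex_realP; exists a.
split.
  exists (1 - a); split; last by lra.
  by rewrite -[z](subKr 1) lamE rmorphB rmorph1.
have -> : 1 - (2 - z) = - (1 - z) by ring.
exact: bipartite_eigenvalueN A_bipartite _ ev.
Qed.

End StochasticSpectrum.

Lemma mxblock_row_sum (V : nmodType) p q (p_ : 'I_p -> nat) (q_ : 'I_q -> nat)
    (B_ : forall i j, 'M[V]_(p_ i, q_ j)) (k : 'I_(\sum_i p_ i)) :
  \sum_l (\mxblock_(i, j) B_ i j) k l =
  \sum_j \sum_l B_ (tagnat.sig1 k) j (tagnat.sig2 k) l.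
Proof.
pose G (p : {j : 'I_q & 'I_(q_ j)}) :=
  B_ (tagnat.sig1 k) (tag p) (tagnat.sig2 k) (tagged p).
transitivity (\sum_l G (tagnat.sig l)); first by apply: eq_bigr => l _; rewrite mxE.
rewrite -(reindex _ tagnat.sig_bij_on).
by rewrite (sig_big_dep xpredT (fun _ => xpredT)
  (fun j l => B_ (tagnat.sig1 k) j (tagnat.sig2 k) l)).
Qed.

Lemma invmx_diag (F : fieldType) m (r : 'rV[F]_m) :
  (forall i, r 0 i != 0) -> invmx (diag_mx r) = diag_mx (map_mx GRing.inv r).
Proof.
move=> r_neq0.
have rr' : diag_mx r *m diag_mx (map_mx GRing.inv r) = 1%:M.
  apply/matrixP => i j; rewrite mul_diag_mx !mxE.
  by case: eqP => [->|]; rewrite ?mulfV ?mulr0.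
have [r_unit _] := mulmx1_unit rr'.
by rewrite -[RHS](mulKmx r_unit) rr' mulmx1.
Qed.

Section Layers.
Variables (R : realType) (n M : nat) (W : nat -> 'M[R]_n).
Hypothesis W_ge0 : forall t, (1 <= t <= M)%N -> forall i j, 0 <= W t i j.
Hypothesis W_row_sum_gt0 : forall t, (1 <= t <= M)%N -> forall i, 0 < \sum_j W t i j.
Hypothesis mu_gt0 : forall t, (1 <= t <= M)%N -> forall i, 0 < mu W t i 0.

Lemma SmatE t i j : (1 <= t <= M)%N -> Smat W t i j = W t i j / \sum_k W t i k.
Proof.
move=> t_in; rewrite /Smat /Dmat invmx_diag => [|k]; last first.
  by rewrite mxE lt0r_neq0 ?W_row_sum_gt0.
by rewrite mul_diag_mx !mxE mulrC.
Qed.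

Lemma Smat_ge0 t i j : (1 <= t <= M)%N -> 0 <= Smat W t i j.
Proof. by move=> t_in; rewrite SmatE // divr_ge0 ?W_ge0 ?ltW ?W_row_sum_gt0. Qed.

Lemma Smat_row_sum1 t i : (1 <= t <= M)%N -> \sum_j Smat W t i j = 1.
Proof.
move=> t_in; under eq_bigr do rewrite SmatE //.
by rewrite -mulr_suml mulfV ?lt0r_neq0 ?W_row_sum_gt0.
Qed.

Lemma mu_succE t i : (0 < t)%N ->
  mu W t.+1 i 0 = \sum_j mu W t j 0 * Smat W t j i.
Proof.
case: t => // t _; rewrite /mu /= mxE.
by apply: eq_bigr => j _; rewrite mxE mulrC.
Qed.

Lemma TmatE t i j : (0 < t < M)%N ->
  Tmat W t i j = mu W t j 0 * Smat W t j i / mu W t.+1 i 0.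
Proof.
move=> t_in; rewrite /Tmat /Dmu invmx_diag => [|k]; last first.
  by rewrite !mxE lt0r_neq0 // mu_gt0 //; lia.
by rewrite mul_mx_diag mul_diag_mx !mxE; ring.
Qed.

Lemma Tmat_ge0 t i j : (0 < t < M)%N -> 0 <= Tmat W t i j.
Proof.
move=> t_in; rewrite TmatE // divr_ge0 ?mulr_ge0 ?Smat_ge0 ?ltW ?mu_gt0 //; lia.
Qed.

Lemma Tmat_row_sum1 t i : (0 < t < M)%N -> \sum_j Tmat W t i j = 1.
Proof.
move=> t_in; under eq_bigr do rewrite TmatE //.
rewrite -mulr_suml -mu_succE; last lia.
by rewrite mulfV // lt0r_neq0 // mu_gt0 //; lia.
Qed.

Lemma Tmat_balance t i j : (0 < t < M)%N ->
  mu W t.+1 i 0 * Tmat W t i j = mu W t j 0 * Smat W t j i.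
Proof. by move=> t_in; rewrite TmatE // mulrC divfK ?lt0r_neq0 ?mu_gt0 //; lia. Qed.

Definition layer_degree (s : nat) : R := ((s.+1 < M)%N + (0 < s)%N)%:R.

(* Block [(s, r)] of C up to the factor [1 / layer_degree s]; block indices are 0-based,
   so block [s] is time layer [s + 1]. *)
Definition layer_link (s r : nat) : 'M[R]_n :=
  if r == s.+1 then Kmat W s.+1 else if s == r.+1 then Tmat W s else 0.

Lemma CblockE (s r : 'I_M) : Cblock W s r = (layer_degree s)^-1 *: layer_link s r.
Proof.
rewrite /Cblock /layer_link /layer_degree; case: s r => [s s_lt] [r r_lt] /=.
case: ifP => [/andP [/eqP s0 /eqP r1]|not_first].
  rewrite s0 r1 (_ : (1 < M)%N); last lia.
  by rewrite /= invr1 scale1r.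
case: ifP => [/andP [/eqP sM /eqP rs]|not_last].
  rewrite -sM -rs eqxx (_ : (r.+2 < M)%N = false); last lia.
  rewrite (_ : (r == r.+2) = false); last lia.
  by rewrite /= invr1 scale1r.
case: ifP => [/eqP rs|r_ne].
  rewrite -rs eqxx (_ : (r.+2 < M)%N); last lia.
  by rewrite (_ : (r == r.+2) = false); last lia.
case: ifP => [/eqP rs|_]; last by rewrite ifN_eq ?scaler0 // eq_sym r_ne.
rewrite (_ : (s.+1 < M)%N); last lia.
by rewrite (_ : (0 < s)%N); last lia.
Qed.

Lemma layer_degree_gt0 (s : 'I_M) : (1 < M)%N -> 0 < layer_degree s.
Proof. by move=> M_gt1; rewrite ltr0n; have := ltn_ord s; case: (s : nat) => /=; lia. Qed.

Lemma layer_link_ge0 (s r : 'I_M) i j : 0 <= layer_link s r i j.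
Proof.
have [s_lt r_lt] := (ltn_ord s, ltn_ord r).
rewrite /layer_link; case: ifP => [/eqP rE|_]; first by apply: Smat_ge0; lia.
case: ifP => [/eqP sE|_]; last by rewrite mxE.
by apply: Tmat_ge0; lia.
Qed.

Lemma layer_link_row_sum (s : 'I_M) i :
  \sum_(r < M) \sum_j layer_link s r i j = layer_degree s.
Proof.
have s_lt := ltn_ord s.
have row_sum (r : 'I_M) : \sum_j layer_link s r i j =
    (if r == s.+1 :> nat then 1 else 0) + (if (0 < s)%N && (r == s.-1 :> nat) then 1 else 0).
  have r_lt := ltn_ord r.
  rewrite /layer_link; case: ifP => [/eqP rE|_].
    rewrite Smat_row_sum1; last lia.
    by rewrite (_ : (0 < s)%N && (r == s.-1 :> nat) = false) ?addr0 //; lia.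
  rewrite add0r; case: ifP => [/eqP sE|sN].
    rewrite Tmat_row_sum1; last lia.
    by rewrite (_ : (0 < s)%N && (r == s.-1 :> nat)) //; lia.
  rewrite big1 => [|j _]; last by rewrite mxE.
  by rewrite (_ : (0 < s)%N && (r == s.-1 :> nat) = false) //; lia.
rewrite (eq_bigr _ (fun r _ => row_sum r)) big_split /= -!big_mkcond.
rewrite (big_ord1_eq _ (fun=> 1)) (big_ord1_cond_eq _ (fun=> 1) (fun=> (0 < s)%N)).
rewrite /layer_degree natrD.
by rewrite (_ : (s.-1 < M)%N); [case: (s.+1 < M)%N; case: (0 < s)%N | lia].
Qed.

Lemma layer_link_balance (s r : 'I_M) i j :
  mu W s.+1 i 0 * layer_link s r i j = mu W r.+1 j 0 * layer_link r s j i.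
Proof.
have [s_lt r_lt] := (ltn_ord s, ltn_ord r).
rewrite /layer_link; have [rE|rN] := eqVneq (r : nat) s.+1.
  rewrite rE (_ : (s == s.+2 :> nat) = false); last lia.
  by rewrite Tmat_balance //; lia.
have [sE|sN] := eqVneq (s : nat) r.+1.
  by rewrite Tmat_balance sE //; lia.
by rewrite !mxE !mulr0.
Qed.

Lemma layer_link_neq0 (s r : nat) i j : layer_link s r i j != 0 -> odd s != odd r.
Proof.
rewrite /layer_link; case: ifP => [/eqP -> _|_]; first by rewrite /=; case: (odd s).
case: ifP => [/eqP -> _|_]; first by rewrite /=; case: (odd r).
by rewrite mxE eqxx.
Qed.

Lemma Cblock_ge0 (s r : 'I_M) i j : 0 <= Cblock W s r i j.
Proof. by rewrite CblockE mxE mulr_ge0 ?invr_ge0 ?ler0n ?layer_link_ge0. Qed.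

Lemma Cblock_row_sum1 (s : 'I_M) i : (1 < M)%N -> \sum_r \sum_j Cblock W s r i j = 1.
Proof.
move=> M_gt1; under eq_bigr do under eq_bigr do rewrite CblockE mxE.
under eq_bigr do rewrite -mulr_sumr.
by rewrite -mulr_sumr layer_link_row_sum mulVf // lt0r_neq0 // layer_degree_gt0.
Qed.

Lemma Cblock_reversible (s r : 'I_M) i j : (1 < M)%N ->
  layer_degree s * mu W s.+1 i 0 * Cblock W s r i j =
  layer_degree r * mu W r.+1 j 0 * Cblock W r s j i.
Proof.
move=> M_gt1; rewrite !CblockE !mxE -!mulrA !(mulrCA (layer_degree _)).
by rewrite !mulKf ?lt0r_neq0 ?layer_degree_gt0 // layer_link_balance.
Qed.

Lemma Cblock_bipartite (s r : 'I_M) i j : Cblock W s r i j != 0 -> odd s != odd r.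
Proof. by rewrite CblockE mxE mulf_eq0 negb_or => /andP [_ /layer_link_neq0]. Qed.

End Layers.

Theorem corollary1 (R : realType) (n M : nat) (W : nat -> 'M[R]_n) :
  (2 <= n)%N -> (2 <= M)%N ->
  (forall t : nat, (1 <= t <= M)%N -> forall i j : 'I_n, 0 <= W t i j) ->
  (forall t : nat, (1 <= t <= M)%N -> forall i : 'I_n, 0 < \sum_(j < n) W t i j) ->
  (forall t : nat, (1 <= t <= M)%N -> forall i : 'I_n, 0 < mu W t i 0) ->
  forall z : R[i],
    eigenvalue (map_mx (fun x : R => x%:C%C) (Lmat M W)) z ->
    (exists x : R, z = x%:C%C /\ 0 <= x <= 2) /\
    eigenvalue (map_mx (fun x : R => x%:C%C) (Lmat M W)) (2 - z).
Proof.
move=> _ M_gt1 W_ge0 W_row_sum_gt0 mu_gt0.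
apply: (stochastic_laplacian_spectrum
  (d := fun k =>
     layer_degree R M (tagnat.sig1 k) * mu W (tagnat.sig1 k).+1 (tagnat.sig2 k) 0)
  (side := fun k => odd (tagnat.sig1 k))).
- by move=> k l; rewrite mxE Cblock_ge0.
- by move=> k; rewrite mxblock_row_sum Cblock_row_sum1.
- by move=> k; rewrite mulr_gt0 ?layer_degree_gt0 // mu_gt0 //= ltn_ord.
- by move=> k l; rewrite !mxE Cblock_reversible.
- by move=> k l; rewrite mxE => /Cblock_bipartite.
Qed.
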